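(* Let $P$ be a finite set of $n$ points in a metric space $(X,d)$, $k\in[n]$, $\alpha\ge1$, and let $\{B(c_1,\alpha r(c_1)),\dots,B(c_m,\alpha r(c_m))\}$ be the balls output by Algorithm 1 on $(P,k,\alpha)$. If $S\subseteq P$ satisfies $S\cap B(c_i,\alpha r(c_i))\neq\emptyset$ for every $i\in[m]$, then for every $x\in P$, $d(x,S)\le 3\alpha\, r(x)$.
   Context: $B(v,\rho)=\{u\in P: d(v,u)\le\rho\}$; the fair radius $r(v)$ is the minimum $\rho\ge0$ with $|B(v,\rho)|\ge n/k$; $d(x,S)=\min_{s\in S}d(x,s)$. Algorithm 1: start with $Z=\emptyset$, $\mathcal{C}=\emptyset$; while $Z\ne P$, pick $c\in\arg\min_{x\in P\setminus Z}r(x)$, add $c$ to $\mathcal{C}$, and add to $Z$ every $x\in P\setminus Z$ with $d(x,c)\le 2\alpha r(x)$; output $\{B(c,\alpha r(c)):c\in\mathcal{C}\}$. *)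

From mathcomp Require Import all_boot all_order all_algebra.
From mathcomp Require Import reals.
Set Implicit Arguments. Unset Strict Implicit. Unset Printing Implicit Defensive.
Import Order.TTheory GRing.Theory Num.Theory.
Local Open Scope ring_scope.

Section Defs.
Variables (R : realType) (T : eqType).

Definition is_metric (d : T -> T -> R) : Prop :=
  [/\ forall x y, 0 <= d x y,
      forall x y, d x y = 0 <-> x = y,
      forall x y, d x y = d y x &
      forall x y z, d x z <= d x y + d y z].

(* |B(v, rho)| where B(v,rho) = {u in P : d(v,u) <= rho}; P is duplicate-free *)
Definition ball_card (d : T -> T -> R) (P : seq T) (v : T) (rho : R) : nat :=
  count (fun u => d v u <= rho) P.

Definition is_fair_radius (d : T -> T -> R) (P : seq T) (k : nat) (v : T)
    (rho : R) : Prop :=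
  [/\ 0 <= rho,
      (size P)%:R / k%:R <= ( (ball_card d P v rho)%:R :> R) &
      forall rho' : R, 0 <= rho' ->
        (size P)%:R / k%:R <= ( (ball_card d P v rho')%:R :> R) -> rho <= rho'].

(* One iteration of the while-loop of Algorithm 1 with chosen center c:
   add to Z every x in P \ Z with d(x,c) <= 2 alpha r(x). *)
Definition alg_step (d : T -> T -> R) (r : T -> R) (alpha : R) (P : seq T)
    (Z : seq T) (c : T) : seq T :=
  Z ++ [seq x <- P | (x \notin Z) && (d x c <= 2 * alpha * r x)].

(* Z cs : starting from the covered set Z, the sequence of centers
   cs is a possible (tie-breaking-dependent) execution of the remaining loop:
   each center minimizes r over P \ Z, and the loop stops exactly when Z = P. *)
Fixpoint alg_run (d : T -> T -> R) (r : T -> R) (alpha : R) (P : seq T)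
    (Z : seq T) (cs : seq T) : Prop :=
  match cs with
  | [::] => {subset P <= Z}
  | c :: cs' =>
      [/\ c \in P, c \notin Z,
          (forall x, x \in P -> x \notin Z -> r c <= r x) &
          alg_run d r alpha P (alg_step d r alpha P Z c) cs']
  end.

Definition algorithm1_centers d r alpha P (cs : seq T) : Prop :=
  alg_run d r alpha P [::] cs.

End Defs.

From mathcomp Require Import all_boot all_order all_algebra.
From mathcomp Require Import reals.
From mathcomp Require Import ring.
Import Order.TTheory GRing.Theory Num.Theory.
Local Open Scope ring_scope.

(* Algorithm 1 runs until every point of P is covered, and a point x leaves
   the uncovered set P \ Z only when some center c is chosen with
   d(x,c) <= 2 alpha r(x); as c minimises r over the uncovered points, x among
   them, also r(c) <= r(x).
   Given such a center c and a point s of S in B(c, alpha r(c)), the triangle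
   inequality gives
       d(x,s) <= d(x,c) + d(c,s) <= 2 alpha r(x) + alpha r(c) <= 3 alpha r(x),
   which is Lemma [triangle_via_center].  The main theorem chains the two
   facts (the run starts from Z = [::], so the witness center always exists). *)

Lemma mem_alg_step {R : realType} {T : eqType} (d : T -> T -> R) (r : T -> R)
    (alpha : R) (P Z : seq T) (c x : T) :
  (x \in alg_step d r alpha P Z c) =
  (x \in Z) || [&& x \in P, x \notin Z & d x c <= 2 * alpha * r x].
Proof. by rewrite /alg_step mem_cat mem_filter [in X in _ || X]andbC. Qed.

Lemma alg_run_witness_center {R : realType} {T : eqType} {d : T -> T -> R}
    {r : T -> R} {alpha : R} {P : seq T} {cs Z : seq T} :
  alg_run d r alpha P Z cs -> forall x, x \in P ->
  x \in Z \/ exists2 c, c \in cs & d x c <= 2 * alpha * r x /\ r c <= r x.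
Proof.
elim: cs Z => [|c cs IH] Z /= => [PsubZ x xP | [_ _ c_min run] x xP].
  by left; apply: PsubZ.
have [xZ|xNZ] := boolP (x \in Z); first by left.
right; have [dxc|dxc] := boolP (d x c <= 2 * alpha * r x).
  by exists c; [rewrite mem_head | split => //; apply: c_min].
have [|[c' c'cs capt]] := IH _ run x xP.
  by rewrite mem_alg_step (negbTE xNZ) xP (negbTE dxc) andbF.
by exists c' => //; rewrite in_cons c'cs orbT.
Qed.

Lemma triangle_via_center {R : realDomainType} {alpha dxc dcs dxs rx rc : R} :
  0 <= alpha -> dxs <= dxc + dcs ->
  dxc <= 2 * alpha * rx -> dcs <= alpha * rc -> rc <= rx ->
  dxs <= 3 * alpha * rx.
Proof.
move=> alpha_ge0 tri le_dxc le_dcs le_rc.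
have le_dcs' : dcs <= alpha * rx by apply: le_trans le_dcs (ler_wpM2l _ le_rc).
have -> : 3 * alpha * rx = 2 * alpha * rx + alpha * rx by ring.
exact: le_trans tri (lerD le_dxc le_dcs').
Qed.

Theorem mainTheorem2 (R : realType) (T : eqType) (d : T -> T -> R)
  (P : seq T) (k : nat) (alpha : R) (r : T -> R) (cs S : seq T) :
  is_metric d ->
  uniq P ->
  (1 <= k <= size P)%N ->
  1 <= alpha ->
  (forall v, v \in P -> is_fair_radius d P k v (r v)) ->
  algorithm1_centers d r alpha P cs ->
  {subset S <= P} ->
  (forall c, c \in cs -> exists2 s, s \in S & d c s <= alpha * r c) ->
  forall x, x \in P -> exists2 s, s \in S & d x s <= 3 * alpha * r x.
Proof.
move=> [_ _ _ tri] _ _ alpha_ge1 _ run _ hit x xP.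
have [//|[c c_cs [dxc rcx]]] := alg_run_witness_center run x xP.
have [s sS dcs] := hit c c_cs.
exists s => //; apply: (triangle_via_center _ (tri x c s)) dxc dcs rcx.
exact: le_trans alpha_ge1.
Qed.
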